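(* Let $X\subset\mathbb{R}^n$ be closed and $\bar x\in X$. If $X$ is nearly radial at $\bar x$, then $X$ is $1$-peaceful at $\bar x$. Conversely, if $X$ is Clarke regular (i.e. $N_X(y)=\hat N_X(y)$) at every point $y\in X$ in a neighbourhood of $\bar x$ and $X$ is $1$-peaceful at $\bar x$, then $X$ is nearly radial at $\bar x$.
   Context: $\mathbb{B}$ is the closed unit ball, $\mathbb{B}_\epsilon(x)$ the closed ball of radius $\epsilon$ about $x$. The (Bouligand) tangent cone is $T_X(x)=\{\lim t_r^{-1}(x_r-x): t_r\downarrow0,\ x_r\to x,\ x_r\in X\}$. $X$ is nearly radial at $\bar x$ if $\operatorname{dist}(\bar x,x+T_X(x))/|x-\bar x|\to0$ as $x\to\bar x$, $x\in X$, $x\neq\bar x$ (equivalently, as stated in the paper, $\operatorname{dist}(\bar x, x+T_X(x))\to 0$ in the scale-invariant sense used there; we use the normalized form). Regular normals: $v\in\hat N_X(y)$ iff $\langle v,x-y\rangle\le o(|x-y|)$ for $x\in X$; normals: $v\in N_X(y)$ iff there are $y^\nu\to y$ in $X$ and $v^\nu\to v$ with $v^\nu\in\hat N_X(y^\nu)$. Pompeiu–Hausdorff distance: $\mathbf d(C,D)=\inf\{\eta\ge0:C\subset D+\eta\mathbb{B},D\subset C+\eta\mathbb{B}\}$. For set-valued $S$ on domain $Y$, $\operatorname{lip}S(\bar y):=\limsup_{y,y'\to\bar y,\,y,y'\in Y,\,y\ne y'}\frac{\mathbf d(S(y'),S(y))}{|y'-y|}$. Let $\Phi_\epsilon:X\rightrightarrows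 X$ and $\tilde\Phi_\epsilon:\mathbb{R}^n\rightrightarrows X$ both be given by $x\mapsto\mathbb{B}_\epsilon(x)\cap X$. $X$ is $1$-peaceful at $\bar x$ if $\operatorname{lip}\Phi_\epsilon(\bar x)<\infty$ for all small $\epsilon>0$ and $\limsup_{\epsilon\downarrow0}\operatorname{lip}\tilde\Phi_\epsilon(\bar x)\le1$. *)

From mathcomp Require Import all_boot.
From Stdlib Require Import Reals.
Open Scope R_scope.

Definition vec (n : nat) := 'I_n -> R.

Definition vadd {n} (u v : vec n) : vec n := fun i => u i + v i.
Definition vsub {n} (u v : vec n) : vec n := fun i => u i - v i.
Definition vscal {n} (a : R) (u : vec n) : vec n := fun i => a * u i.

Definition dot {n} (u v : vec n) : R := \big[Rplus/R0]_(i < n) (u i * v i).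
Definition vnorm {n} (u : vec n) : R := sqrt (dot u u).

Definition vconv {n} (u : nat -> vec n) (x : vec n) : Prop :=
  forall eps, 0 < eps -> exists N : nat, forall k : nat, (N <= k)%nat ->
    vnorm (vsub (u k) x) < eps.

Definition is_closed {n} (X : vec n -> Prop) : Prop :=
  forall (u : nat -> vec n) (x : vec n),
    (forall k, X (u k)) -> vconv u x -> X x.

Definition ball {n} (x : vec n) (eps : R) : vec n -> Prop :=
  fun z => vnorm (vsub z x) <= eps.

Definition tangent_cone {n} (X : vec n -> Prop) (x : vec n) (v : vec n) : Prop :=
  exists (t : nat -> R) (xs : nat -> vec n),
    (forall r, 0 < t r) /\ Un_cv t 0 /\
    (forall r, X (xs r)) /\ vconv xs x /\
    vconv (fun r => vscal (/ t r) (vsub (xs r) x)) v.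

Definition is_inf (E : R -> Prop) (d : R) : Prop :=
  (forall r, E r -> d <= r) /\
  (forall b, (forall r, E r -> b <= r) -> b <= d).

Definition is_dist {n} (p : vec n) (S : vec n -> Prop) (d : R) : Prop :=
  is_inf (fun r => exists s, S s /\ r = vnorm (vsub p s)) d.

Definition nearly_radial {n} (X : vec n -> Prop) (xbar : vec n) : Prop :=
  forall eps, 0 < eps -> exists delta, 0 < delta /\
    forall x, X x -> x <> xbar -> vnorm (vsub x xbar) < delta ->
      forall d, is_dist xbar (fun z => exists v, tangent_cone X x v /\ z = vadd x v) d ->
        d / vnorm (vsub x xbar) <= eps.

Definition reg_normal {n} (X : vec n -> Prop) (y v : vec n) : Prop :=
  forall eps, 0 < eps -> exists delta, 0 < delta /\
    forall x, X x -> vnorm (vsub x y) < delta ->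
      dot v (vsub x y) <= eps * vnorm (vsub x y).

Definition normal {n} (X : vec n -> Prop) (y v : vec n) : Prop :=
  exists (ys vs : nat -> vec n),
    (forall k, X (ys k)) /\ vconv ys y /\ vconv vs v /\
    (forall k, reg_normal X (ys k) (vs k)).

Definition clarke_regular_near {n} (X : vec n -> Prop) (xbar : vec n) : Prop :=
  exists delta, 0 < delta /\
    forall y, X y -> vnorm (vsub y xbar) < delta ->
      forall v, normal X y v <-> reg_normal X y v.

(* Pompeiu-Hausdorff distance: hausdorff_le C D eta  <->  d(C,D) <= eta
   (d(C,D) = inf of the admissible eta's, an upward closed set, possibly +oo). *)
Definition hausdorff_le {n} (C D : vec n -> Prop) (eta : R) : Prop :=
  forall eta', eta < eta' ->
    (forall c, C c -> exists d, D d /\ vnorm (vsub c d) <= eta') /\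
    (forall d, D d -> exists c, C c /\ vnorm (vsub d c) <= eta').

(* lip_le S Y ybar L  <->  lip S(ybar) <= L, where
   lip S(ybar) = limsup_{y,y' -> ybar, y,y' in Y, y <> y'} d(S y', S y)/|y'-y|. *)
Definition lip_le {n} (S : vec n -> vec n -> Prop) (Y : vec n -> Prop)
    (ybar : vec n) (L : R) : Prop :=
  forall L', L < L' -> exists delta, 0 < delta /\
    forall y y', Y y -> Y y' -> y <> y' ->
      vnorm (vsub y ybar) < delta -> vnorm (vsub y' ybar) < delta ->
      hausdorff_le (S y') (S y) (L' * vnorm (vsub y' y)).

(* Phi_eps (on domain X) and tilde Phi_eps (on domain R^n): x |-> B_eps(x) /\ X. *)
Definition Phi {n} (X : vec n -> Prop) (eps : R) (x : vec n) : vec n -> Prop :=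
  fun z => ball x eps z /\ X z.

Definition one_peaceful {n} (X : vec n -> Prop) (xbar : vec n) : Prop :=
  (exists eps0, 0 < eps0 /\ forall eps, 0 < eps < eps0 ->
     exists L, lip_le (Phi X eps) X xbar L) /\
  (forall L', 1 < L' -> exists eps1, 0 < eps1 /\ forall eps, 0 < eps < eps1 ->
     lip_le (Phi X eps) (fun _ => True) xbar L').

From HB Require Import structures.
From mathcomp Require Import all_boot zify.
From Stdlib Require Import Reals Lra Lia Psatz Classical ClassicalEpsilon FunctionalExtensionality.
Open Scope R_scope.

(* Fix L > 1 and c = 1/L.  Given y, y' near xbar and
   z in B_eps(y') /\ X, we must find w in B_eps(y) /\ X with |z - w| <= L |y - y'|.
   Take an Ekeland-type point ws: a minimizer of h = max(|. - y|, eps) over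
   the w in X with h w + c |w - z| <= h z (penalized_min); this already gives
   c |ws - z| <= |y - y'|.  If ws were outside B_eps(y), near radiality gives a
   tangent vector at ws pointing almost exactly towards xbar, hence (since y is
   close to xbar) a direction of definite decrease of |. - y| + c |. - ws|
   (obtuse_direction); following the tangent sequence yields a point of X
   that contradicts the minimality of ws (first_order_descent,
   tangent_descent, radial_descent).  Hence local_projection, which bounds
   lip Phi_eps(xbar) by L on any domain.

   For x in X at distance r from xbar, the Lipschitz bound for
   tilde Phi_r at xbar, applied at the points xbar + s u (u the unit vector
   from x to xbar, s -> 0), produces points of B_r(xbar + s u) /\ X within
   L s of x; their difference quotients cluster at a tangent vector v with
   |v| <= L and <x - xbar, v> <= -r (peaceful_tangent), and x + r v / L^2 is
   within e r of xbar when L = 1 + e^2/2.  This argument only uses the second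
   half of 1-peacefulness. *)

(* Real addition as a commutative monoid, so that the bigop lemmas apply to dot. *)
HB.instance Definition _ := Monoid.isComLaw.Build R R0 Rplus
  (fun x y z => esym (Rplus_assoc x y z)) Rplus_comm Rplus_0_l.

Ltac vext := apply functional_extensionality => ?; rewrite /vsub /vadd /vscal; ring.

Lemma Rabs_le_inv x b : Rabs x <= b -> - b <= x <= b.
Proof. by move=> H; have := Rle_abs x; have := Rle_abs (- x); rewrite Rabs_Ropp; lra. Qed.

Section Euclid.
Context {n : nat}.
Implicit Types u v w : vec n.

Lemma dot_comm u v : dot u v = dot v u.
Proof. by apply: eq_bigr => i _; rewrite Rmult_comm. Qed.

Lemma dot_addl u v w : dot (vadd u v) w = dot u w + dot v w.
Proof. rewrite /dot /vadd -big_split /=; apply: eq_bigr => i _; ring. Qed.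

Lemma dot_scall a u w : dot (vscal a u) w = a * dot u w.
Proof.
  rewrite /dot /vscal (big_morph (fun x => a * x) (id1 := R0) (op1 := Rplus)).
  - by apply: eq_bigr => i _; ring.
  - by move=> x y /=; ring.
  - ring.
Qed.

Lemma dot_subl u v w : dot (vsub u v) w = dot u w - dot v w.
Proof.
  have -> : vsub u v = vadd u (vscal (-1) v) by vext.
  rewrite dot_addl dot_scall; ring.
Qed.

Lemma dot_addr u v w : dot w (vadd u v) = dot w u + dot w v.
Proof. by rewrite dot_comm dot_addl !(dot_comm w). Qed.

Lemma dot_scalr a u w : dot w (vscal a u) = a * dot w u.
Proof. by rewrite dot_comm dot_scall (dot_comm w). Qed.

Lemma dot_subr u v w : dot w (vsub u v) = dot w u - dot w v.
Proof. by rewrite dot_comm dot_subl !(dot_comm w). Qed.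

Lemma dot_sq_add u v : dot (vadd u v) (vadd u v) = dot u u + 2 * dot u v + dot v v.
Proof. rewrite dot_addl !dot_addr (dot_comm v u); ring. Qed.

Lemma dot_coord u i : u i * u i <= dot u u.
Proof.
  rewrite /dot (bigD1 i) //= -{1}(Rplus_0_r (u i * u i)).
  apply: Rplus_le_compat_l.
  by apply: (big_ind (fun a => 0 <= a)) => [|a b|j _]; nra.
Qed.

Lemma dot_pos u : 0 <= dot u u.
Proof. by apply: (big_ind (fun a => 0 <= a)) => [|a b|i _]; nra. Qed.

Lemma dot_zero_l u : (forall i, u i = 0) -> forall v, dot u v = 0.
Proof. by move=> H v; rewrite /dot big1 // => i _; rewrite H; ring. Qed.

Lemma vnorm_pos u : 0 <= vnorm u.
Proof. exact: sqrt_pos. Qed.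

Lemma vnorm_sq u : vnorm u * vnorm u = dot u u.
Proof. exact/sqrt_sqrt/dot_pos. Qed.

Lemma vnorm_le_sq u r : 0 <= r -> dot u u <= r * r -> vnorm u <= r.
Proof.
  move=> Hr H; have := vnorm_pos u; have := vnorm_sq u.
  move=> E P; apply: Rnot_lt_le => Hc; nra.
Qed.

Lemma sq_le_vnorm u r : 0 <= r -> vnorm u <= r -> dot u u <= r * r.
Proof. move=> Hr H; rewrite -vnorm_sq; have := vnorm_pos u; nra. Qed.

Lemma coord_le u i : Rabs (u i) <= vnorm u.
Proof. rewrite -sqrt_Rsqr_abs; exact/sqrt_le_1_alt/dot_coord. Qed.

Lemma vnorm_zero : vnorm (fun _ : 'I_n => 0) = 0.
Proof. by rewrite /vnorm dot_zero_l // sqrt_0. Qed.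

Lemma vnorm_eq0 u : vnorm u = 0 -> u = (fun _ => 0).
Proof.
  move=> H; apply: functional_extensionality => i.
  have := coord_le u i; rewrite H => H1.
  have H2 : Rabs (u i) = 0 by have := Rabs_pos (u i); lra.
  by apply: NNPP => Hc; apply: (Rabs_no_R0 _ Hc H2).
Qed.

Lemma cauchy_schwarz u v : dot u v <= vnorm u * vnorm v.
Proof.
  set a := vnorm u; set b := vnorm v.
  have Ha : 0 <= a by apply: vnorm_pos.
  have Hb : 0 <= b by apply: vnorm_pos.
  have Ea : a * a = dot u u by apply: vnorm_sq.
  have Eb : b * b = dot v v by apply: vnorm_sq.
  have zero_of_norm0 w : vnorm w = 0 -> forall z, dot w z = 0.
    by move/vnorm_eq0 => ->; apply: dot_zero_l.
  have [Za|Pa] := Req_dec a 0.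
    by rewrite zero_of_norm0 // Za; lra.
  have [Zb|Pb] := Req_dec b 0.
    by rewrite dot_comm zero_of_norm0 // Zb; lra.
  (* 0 <= |b u - a v|^2 = 2 a b (a b - u.v) *)
  have H := dot_pos (vsub (vscal b u) (vscal a v)).
  rewrite !dot_subl !dot_subr !dot_scall !dot_scalr (dot_comm v u) -Ea -Eb in H.
  have Pab : 0 < 2 * a * b by nra.
  have : 0 <= a * b - dot u v.
    by apply: (Rmult_le_reg_l (2 * a * b)) => //; rewrite Rmult_0_r; nra.
  lra.
Qed.

Lemma vnorm_scal a u : vnorm (vscal a u) = Rabs a * vnorm u.
Proof.
  rewrite /vnorm dot_scall dot_scalr -Rmult_assoc sqrt_mult; first by rewrite sqrt_Rsqr_abs.
  - nra.
  - exact: dot_pos.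
Qed.

Lemma vnorm_opp u : vnorm (vscal (-1) u) = vnorm u.
Proof. by rewrite vnorm_scal Rabs_Ropp Rabs_R1 Rmult_1_l. Qed.

Lemma cauchy_schwarz_abs u v : Rabs (dot u v) <= vnorm u * vnorm v.
Proof.
  apply: Rabs_le; split; last exact: cauchy_schwarz.
  have := cauchy_schwarz (vscal (-1) u) v; rewrite dot_scall vnorm_opp; lra.
Qed.

Lemma vnorm_add u v : vnorm (vadd u v) <= vnorm u + vnorm v.
Proof.
  apply: vnorm_le_sq; first by have := vnorm_pos u; have := vnorm_pos v; lra.
  rewrite dot_sq_add -!vnorm_sq; have := cauchy_schwarz u v; lra.
Qed.

Lemma vnorm_add_ge u v : vnorm u - vnorm v <= vnorm (vadd u v).
Proof.
  have := vnorm_add (vadd u v) (vscal (-1) v).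
  have -> : vadd (vadd u v) (vscal (-1) v) = u by vext.
  rewrite vnorm_opp; lra.
Qed.

Lemma vnorm_sub_sym u v : vnorm (vsub u v) = vnorm (vsub v u).
Proof. have -> : vsub u v = vscal (-1) (vsub v u) by vext. exact: vnorm_opp. Qed.

Lemma vnorm_tri u v w : vnorm (vsub u w) <= vnorm (vsub u v) + vnorm (vsub v w).
Proof. have -> : vsub u w = vadd (vsub u v) (vsub v w) by vext. exact: vnorm_add. Qed.

Lemma vnorm_dist_lip u v w : Rabs (vnorm (vsub u w) - vnorm (vsub v w)) <= vnorm (vsub u v).
Proof.
  have := vnorm_tri u v w; have := vnorm_tri v u w; rewrite (vnorm_sub_sym v u).
  by move=> H1 H2; apply: Rabs_le; lra.
Qed.

Lemma vsub_self u : vnorm (vsub u u) = 0.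
Proof. have -> : vsub u u = (fun _ => 0) by vext. exact: vnorm_zero. Qed.

Lemma vsub_eq0 u v : vnorm (vsub u v) = 0 -> u = v.
Proof.
  move/vnorm_eq0 => H; apply: functional_extensionality => i.
  by have := equal_f H i; rewrite /vsub; lra.
Qed.

Lemma vnorm_bound_coords u eta : 0 <= eta -> (forall i, Rabs (u i) <= eta) ->
  vnorm u <= (INR n + 1) * eta.
Proof.
  move=> He H; have Pn := pos_INR n.
  apply: vnorm_le_sq; first nra.
  have -> : dot u u = \big[Rplus/R0]_(i < n) (Rabs (u i) * Rabs (u i)).
    by apply: eq_bigr => i _; rewrite -Rabs_mult Rabs_pos_eq //; nra.
  apply: Rle_trans (_ : \big[Rplus/R0]_(i < n) (eta * eta) <= _).
    apply: (big_ind2 (fun a b => a <= b)) => [|a b c d|i _]; try lra.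
    by have := H i; have := Rabs_pos (u i); nra.
  have iterE m : iter m (Rplus (eta * eta)) R0 = INR m * (eta * eta).
    by elim: m => [|m IH]; [rewrite /=; ring | rewrite iterS IH S_INR; ring].
  rewrite big_const_ord iterE; nra.
Qed.

End Euclid.

Lemma inv_succ_pos (k : nat) : 0 < / (INR k + 1).
Proof. by have := pos_INR k; move=> ?; apply: Rinv_0_lt_compat; lra. Qed.

Lemma inv_succ_mono (a b : nat) : (a <= b)%nat -> / (INR b + 1) <= / (INR a + 1).
Proof.
  move=> /leP Hab; have := le_INR _ _ Hab; have := pos_INR a.
  by move=> ? ?; apply: Rinv_le_contravar; lra.
Qed.

Lemma inv_succ_small eps : 0 < eps -> exists K : nat, / (INR K + 1) < eps.
Proof.
  move=> He; have [N [HN HN0]] := archimed_cor1 eps He; exists N.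
  have P : 0 < INR N by apply: lt_0_INR.
  by apply: Rle_lt_trans HN; apply: Rinv_le_contravar; lra.
Qed.

Lemma vconv_of_rate {n} (u : nat -> vec n) x C : 0 <= C ->
  (forall k, vnorm (vsub (u k) x) <= C * / (INR k + 1)) -> vconv u x.
Proof.
  move=> HC Hu eps He.
  have [K HK] := inv_succ_small (eps / (C + 1)) ltac:(apply: Rdiv_lt_0_compat; lra).
  exists K => k Hk; have := Hu k; have := inv_succ_mono _ _ Hk; have := inv_succ_pos k.
  have -> : eps = (C + 1) * (eps / (C + 1)) by field; lra.
  nra.
Qed.

Lemma inf_exists (E : R -> Prop) : (exists x, E x) -> (forall x, E x -> 0 <= x) ->
  exists d, is_inf E d.
Proof.
  move=> [x Hx] Hb.
  have Hbd : bound (fun y => E (- y)) by exists 0 => y /Hb; lra.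
  have Hne : exists y, E (- y) by exists (- x); rewrite Ropp_involutive.
  have [l [Hl1 Hl2]] := completeness _ Hbd Hne.
  exists (- l); split.
  - move=> r Hr; have : - r <= l by apply: Hl1; rewrite Ropp_involutive.
    lra.
  - move=> b Hbb; have : l <= - b by apply: Hl2 => y /Hbb; lra.
    lra.
Qed.

Section Compactness.
Context {n : nat}.

Lemma real_cluster (u : nat -> R) M : (forall k, Rabs (u k) <= M) ->
  exists l, forall eps, 0 < eps -> forall N, exists p, (N <= p)%nat /\ Rabs (u p - l) < eps.
Proof.
  move=> H.
  have HX k : -M <= u k <= M by exact/Rabs_le_inv/H.
  have [l Hl] := Bolzano_Weierstrass u _ (compact_P3 (-M) M) HX.
  exists l => eps He N.
  have Hn : neighbourhood (disc l (mkposreal eps He)) l by exists (mkposreal eps He).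
  have [p [/leP Hp Hp2]] := Hl _ N Hn.
  by exists p.
Qed.

(* Cluster values of a bounded sequence of vectors, obtained one coordinate
   of the list [l] at a time by refining along 1/(k+1)-good indices. *)
Lemma coords_cluster (u : nat -> vec n) M : (forall k, vnorm (u k) <= M) ->
  forall l : seq 'I_n, exists x : vec n, forall eps, 0 < eps -> forall N, exists p,
    (N <= p)%nat /\ forall i, i \in l -> Rabs (u p i - x i) < eps.
Proof.
  move=> HM; elim => [|j l [x Hx]].
    by exists (fun _ => 0) => eps He N; exists N.
  have [q Hq] := choice (fun k p => (k <= p)%nat /\
      forall i, i \in l -> Rabs (u p i - x i) < / (INR k + 1))
    (fun k => Hx _ (inv_succ_pos k) k).
  have Hb k : Rabs (u (q k) j) <= M by apply: Rle_trans (coord_le _ _) (HM _).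
  have [lj Hlj] := real_cluster _ _ Hb.
  exists (fun i => if i == j then lj else x i) => eps He N.
  have [K HK] := inv_succ_small eps He.
  have [p' [Hp' Hp'2]] := Hlj eps He (maxn N K).
  have [Hq1 Hq2] := Hq p'.
  exists (q p'); split; first lia.
  move=> i; rewrite in_cons; case: eqP => [-> _ //|_ /= Hi].
  apply: Rlt_le_trans (Hq2 _ Hi) _.
  by apply: Rle_trans (inv_succ_mono K p' _) _; [lia | lra].
Qed.

Lemma vec_cluster (u : nat -> vec n) M : (forall k, vnorm (u k) <= M) ->
  exists x : vec n, forall eps, 0 < eps -> forall N, exists p,
    (N <= p)%nat /\ vnorm (vsub (u p) x) < eps.
Proof.
  move=> HM; have [x Hx] := coords_cluster u M HM (enum 'I_n).
  exists x => eps He N.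
  have Hn : 0 < INR n + 2 by have := pos_INR n; lra.
  have [p [Hp Hp2]] := Hx _ (Rdiv_lt_0_compat _ _ He Hn) N.
  exists p; split => //.
  apply: Rle_lt_trans (vnorm_bound_coords _ (eps / (INR n + 2)) _ _) _.
  - by apply: Rlt_le; apply: Rdiv_lt_0_compat.
  - by move=> i; apply/Rlt_le/Hp2; rewrite mem_enum.
  - apply: (Rmult_lt_reg_r (INR n + 2)) => //.
    have -> : (INR n + 1) * (eps / (INR n + 2)) * (INR n + 2) = (INR n + 1) * eps.
      by field; lra.
    nra.
Qed.

(* Every bounded sequence in R^n has a convergent subsequence; the extraction
   p satisfies k <= p k, which is all that the applications need. *)
Lemma bounded_subseq (u : nat -> vec n) M : (forall k, vnorm (u k) <= M) ->
  exists (x : vec n) (p : nat -> nat),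
    (forall k, (k <= p k)%nat) /\ vconv (fun k => u (p k)) x.
Proof.
  move=> HM; have [x Hx] := vec_cluster u M HM.
  have [p Hp] := choice (fun k q => (k <= q)%nat /\ vnorm (vsub (u q) x) < / (INR k + 1))
    (fun k => Hx _ (inv_succ_pos k) k).
  exists x, p; split; first by move=> k; case: (Hp k).
  apply: (vconv_of_rate _ _ 1); first lra.
  by move=> k; rewrite Rmult_1_l; apply: Rlt_le; case: (Hp k).
Qed.

Lemma lim_norm_le (u : nat -> vec n) v L : (forall k, vnorm (u k) <= L) -> vconv u v ->
  vnorm v <= L.
Proof.
  move=> H Hc; apply: le_epsilon => eps He.
  have [N HN] := Hc eps He; have := HN N (leqnn N); have := H N.
  have := vnorm_add (u N) (vscal (-1) (vsub (u N) v)).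
  have -> : vadd (u N) (vscal (-1) (vsub (u N) v)) = v by vext.
  rewrite vnorm_opp; lra.
Qed.

Lemma lim_dot_le (u : nat -> vec n) v a c : (forall k, dot a (u k) <= c) -> vconv u v ->
  dot a v <= c.
Proof.
  move=> H Hc; apply: le_epsilon => eps He.
  have Ha : 0 < vnorm a + 1 by have := vnorm_pos a; lra.
  have [N HN] := Hc _ (Rdiv_lt_0_compat _ _ He Ha).
  have := HN N (leqnn N); have := H N; have := cauchy_schwarz a (vsub v (u N)).
  rewrite dot_subr vnorm_sub_sym => C1 C2 C3.
  have : vnorm a * vnorm (vsub (u N) v) <= eps.
    apply: Rle_trans (_ : (vnorm a + 1) * (eps / (vnorm a + 1)) <= _).
      by have := vnorm_pos (vsub (u N) v); have := vnorm_pos a; nra.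
    by right; field; lra.
  lra.
Qed.

Lemma lipschitz_lim (h : vec n -> R) K (u : nat -> vec n) x : 0 <= K ->
  (forall w w', Rabs (h w - h w') <= K * vnorm (vsub w w')) -> vconv u x ->
  forall eps, 0 < eps -> exists N, forall k, (N <= k)%nat -> Rabs (h (u k) - h x) < eps.
Proof.
  move=> HK Hh Hc eps He.
  have [N HN] := Hc (eps / (K + 1)) ltac:(apply: Rdiv_lt_0_compat; lra).
  exists N => k Hk; have := HN k Hk; have := Hh (u k) x.
  have := vnorm_pos (vsub (u k) x) => P1 P2 P3.
  apply: Rle_lt_trans P2 _.
  apply: Rle_lt_trans (_ : K * (eps / (K + 1)) < _); first nra.
  apply: (Rmult_lt_reg_r (K + 1)); first lra.
  rewrite Rmult_assoc /Rdiv Rmult_assoc Rinv_l; lra.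
Qed.

Lemma lipschitz_le_lim (h : vec n -> R) K a (u : nat -> vec n) x : 0 <= K ->
  (forall w w', Rabs (h w - h w') <= K * vnorm (vsub w w')) -> vconv u x ->
  (forall k, h (u k) <= a) -> h x <= a.
Proof.
  move=> HK Hh Hc Hu; apply: le_epsilon => eps He.
  have [N HN] := lipschitz_lim h K u x HK Hh Hc eps He.
  have /Rabs_def2 := HN N (leqnn N); have := Hu N; lra.
Qed.

Lemma lipschitz_min (P : vec n -> Prop) (h : vec n -> R) (z : vec n) M K :
  P z -> (forall w, P w -> vnorm (vsub w z) <= M) ->
  (forall (u : nat -> vec n) x, (forall k, P (u k)) -> vconv u x -> P x) ->
  0 <= K -> (forall w w', Rabs (h w - h w') <= K * vnorm (vsub w w')) ->
  (forall w, P w -> 0 <= h w) ->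
  exists w, P w /\ forall w', P w' -> h w <= h w'.
Proof.
  move=> Pz HM Hcl HK Hh Hpos.
  have [m [Hm1 Hm2]] := inf_exists (fun r => exists w, P w /\ r = h w)
    (ex_intro _ (h z) (ex_intro _ z (conj Pz erefl)))
    (fun r '(ex_intro w (conj Pw E)) => eq_ind_r _ (Hpos w Pw) E).
  have [a Ha] : exists a : nat -> vec n, forall k, P (a k) /\ h (a k) < m + / (INR k + 1).
    apply: (choice (fun k w => P w /\ h w < m + / (INR k + 1))) => k.
    apply: NNPP => Hn.
    have : m + / (INR k + 1) <= m.
      apply: Hm2 => r [w [Pw ->]]; apply: Rnot_lt_le => Hl; apply: Hn; by exists w.
    by have := inv_succ_pos k; lra.
  have Hab k : vnorm (a k) <= vnorm z + M.
    have := vnorm_add (vsub (a k) z) z; have -> : vadd (vsub (a k) z) z = a k by vext.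
    by have := HM _ (proj1 (Ha k)); lra.
  have [x [p [Hp Hconv]]] := bounded_subseq a _ Hab.
  have Px : P x by apply: (Hcl _ _ (fun k => proj1 (Ha (p k))) Hconv).
  exists x; split => // w' Pw'.
  apply: Rle_trans (Hm1 _ (ex_intro _ w' (conj Pw' erefl))).
  apply: le_epsilon => eps He.
  have [N1 HN1] := lipschitz_lim h K _ x HK Hh Hconv _ (ltac:(lra) : 0 < eps / 2).
  have [K0 HK0] := inv_succ_small (eps / 2) ltac:(lra).
  set k := maxn N1 K0.
  have /Rabs_def2 H2 := HN1 k ltac:(lia).
  have [_ Hlt] := Ha (p k).
  have := inv_succ_mono K0 (p k) ltac:(have := Hp k; lia).
  lra.
Qed.

End Compactness.

Section TangentCone.
Context {n : nat}.
Variable X : vec n -> Prop.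

Lemma tangent_zero x : X x -> tangent_cone X x (fun _ => 0).
Proof.
  move=> Xx; exists (fun r => / (INR r + 1)), (fun _ => x).
  split; [exact: inv_succ_pos | split; [|split; [by [] | split]]].
  - move=> eps He; have [K HK] := inv_succ_small eps He.
    exists K => k /leP Hk; rewrite /R_dist Rminus_0_r Rabs_pos_eq; last exact/Rlt_le/inv_succ_pos.
    by have := inv_succ_mono K k Hk; lra.
  - by move=> eps He; exists 0%nat => k _; rewrite vsub_self.
  - move=> eps He; exists 0%nat => k _.
    have -> : vsub (vscal (/ / (INR k + 1)) (vsub x x)) (fun _ => 0) = (fun _ => 0) by vext.
    by rewrite vnorm_zero.
Qed.

Lemma tangent_scale x v lam : 0 < lam -> tangent_cone X x v -> tangent_cone X x (vscal lam v).
Proof.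
  move=> Hl [t [xs [Ht [Hcv [HX [Hxs Hv]]]]]].
  exists (fun r => t r / lam), xs; split; [|split; [|split; [exact: HX | split; [exact: Hxs|]]]].
  - by move=> r; apply: Rdiv_lt_0_compat.
  - move=> eps He; have [N HN] := Hcv (eps * lam) ltac:(nra).
    exists N => k /HN; rewrite /R_dist !Rminus_0_r /Rdiv Rabs_mult Rabs_inv (Rabs_pos_eq lam); last lra.
    move=> H; apply: (Rmult_lt_reg_r lam) => //; rewrite Rmult_assoc Rinv_l; lra.
  - move=> eps He; have [N HN] := Hv (eps / lam) (Rdiv_lt_0_compat _ _ He Hl).
    exists N => k /HN Hk.
    have -> : vsub (vscal (/ (t k / lam)) (vsub (xs k) x)) (vscal lam v)
        = vscal lam (vsub (vscal (/ t k) (vsub (xs k) x)) v).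
      by have := Ht k => ?; apply: functional_extensionality => i; rewrite /vsub /vscal; field; lra.
    rewrite vnorm_scal Rabs_pos_eq; last lra.
    have -> : eps = lam * (eps / lam) by field; lra.
    exact: Rmult_lt_compat_l.
Qed.

Lemma tangent_of_sequence x (s : nat -> R) (w : nat -> vec n) L (Q : vec n -> Prop) :
  (forall k, 0 < s k <= / (INR k + 1)) -> (forall k, X (w k)) ->
  (forall k, vnorm (vsub (w k) x) <= L * s k) -> 0 <= L ->
  (forall k, Q (vscal (/ s k) (vsub (w k) x))) ->
  (forall (u : nat -> vec n) v, (forall k, Q (u k)) -> vconv u v -> Q v) ->
  exists v, tangent_cone X x v /\ Q v.
Proof.
  move=> Hs HX Hw HL HQ Hcl.
  set q := fun k => vscal (/ s k) (vsub (w k) x).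
  have Hq k : vnorm (q k) <= L.
    have [H1 H2] := Hs k.
    rewrite /q vnorm_scal Rabs_pos_eq; last exact/Rlt_le/Rinv_0_lt_compat.
    apply: (Rmult_le_reg_l (s k)) => //; rewrite -Rmult_assoc Rinv_r; have := Hw k; lra.
  have [v [p [Hp Hconv]]] := bounded_subseq q L Hq.
  have Hsp k : 0 < s (p k) <= / (INR k + 1).
    by have := Hs (p k); have := inv_succ_mono k (p k) (Hp k); lra.
  exists v; split; last exact: (Hcl _ _ (fun k => HQ (p k)) Hconv).
  exists (fun r => s (p r)), (fun r => w (p r)).
  split; [by move=> r; case: (Hsp r) | split; [|split; [by [] | split; [|exact: Hconv]]]].
  - move=> eps He; have [K HK] := inv_succ_small eps He.
    exists K => k /leP Hk; rewrite /R_dist Rminus_0_r Rabs_pos_eq; last by case: (Hsp k); lra.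
    by have := Hsp k; have := inv_succ_mono K k Hk; lra.
  - apply: (vconv_of_rate _ _ L) => // k.
    by have := Hw (p k); have := Hsp k; nra.
Qed.

End TangentCone.

Lemma small_pos3 k1 a1 k2 a2 k3 a3 : 0 <= k1 -> 0 < a1 -> 0 <= k2 -> 0 < a2 ->
  0 <= k3 -> 0 < a3 -> exists e, 0 < e /\ k1 * e <= a1 /\ k2 * e <= a2 /\ k3 * e <= a3.
Proof.
  have key k a e : 0 <= k -> 0 < a -> 0 <= e -> e <= a / (k + 1) -> k * e <= a.
    move=> Hk Ha He Hea; have : e * (k + 1) <= a / (k + 1) * (k + 1).
      by apply: Rmult_le_compat_r; lra.
    have -> : a / (k + 1) * (k + 1) = a by field; lra.
    nra.
  move=> Hk1 Ha1 Hk2 Ha2 Hk3 Ha3.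
  have Hb i a : 0 <= i -> 0 < a -> 0 < a / (i + 1) by move=> ? ?; apply: Rdiv_lt_0_compat; lra.
  set e := Rmin (a1 / (k1 + 1)) (Rmin (a2 / (k2 + 1)) (a3 / (k3 + 1))).
  have He : 0 < e by apply: Rmin_glb_lt; [|apply: Rmin_glb_lt]; exact: Hb.
  exists e; split; first exact: He.
  split; [|split]; apply: key => //; try lra.
  - exact: Rmin_l.
  - exact: Rle_trans (Rmin_r _ _) (Rmin_l _ _).
  - exact: Rle_trans (Rmin_r _ _) (Rmin_r _ _).
Qed.

Section Descent.
Context {n : nat}.
Implicit Types b m p v eta : vec n.

Lemma near_opposite_norm b v k : vnorm (vadd v b) < k * vnorm b ->
  (1 - k) * vnorm b < vnorm v /\ vnorm v < (1 + k) * vnorm b.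
Proof.
  move=> Hvb; have Ev : v = vadd (vadd v b) (vscal (-1) b) by vext.
  split.
  - have := vnorm_add_ge b (vscal (-1) (vadd v b)); rewrite vnorm_opp.
    have -> : vadd b (vscal (-1) (vadd v b)) = vscal (-1) v by vext.
    rewrite vnorm_opp; lra.
  - by have := vnorm_add (vadd v b) (vscal (-1) b); rewrite vnorm_opp -Ev; lra.
Qed.

(* Write p = b + m, where b = w - xbar and m = xbar - y is
   small.  If v is almost the radial direction -b, i.e. |v + b| < 2 tau |b|,
   then v decreases the distance to y at a definite rate, even after paying
   the penalty c |v|: this is where near radiality enters. *)
Lemma obtuse_direction b m v c tau eps dl :
  0 <= c < 1 -> 0 <= tau <= (1 - c) / 8 -> 0 < eps -> 0 <= dl <= eps * (1 - c) / 16 ->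
  vnorm m <= dl -> eps < vnorm (vadd b m) -> vnorm (vadd v b) < 2 * tau * vnorm b ->
  0 < vnorm v /\
  dot (vadd b m) v + c * vnorm (vadd b m) * vnorm v <= - ((1 - c) / 16 * eps * vnorm b).
Proof.
  move=> Hc Htau He Hdl Hm.
  set p := vadd b m; set e' := vadd v b; set nb := vnorm b; set np := vnorm p.
  move=> Hp He'.
  have Hnb0 : 0 <= nb by exact: vnorm_pos.
  have Ev : v = vadd e' (vscal (-1) b) by rewrite /e'; vext.
  have Hnp : np <= nb + dl by have := vnorm_add b m; rewrite -/p -/np -/nb; lra.
  have Hnb : np - dl <= nb.
    have := vnorm_add_ge p (vscal (-1) m); rewrite vnorm_opp.
    have -> : vadd p (vscal (-1) m) = b by rewrite /p; vext.
    rewrite -/np -/nb; lra.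
  have [Hv_ge Hv_lt] := near_opposite_norm b v (2 * tau) He'.
  rewrite -/nb in Hv_ge Hv_lt.
  have Hpb : nb * nb - dl * nb <= dot p b.
    rewrite /p dot_addl -vnorm_sq -/nb.
    have /Rabs_le_inv [H _] := cauchy_schwarz_abs m b.
    by rewrite -/nb in H; nra.
  have Hpe : dot p e' <= (nb + dl) * (2 * tau * nb).
    apply: Rle_trans (cauchy_schwarz p e') _; rewrite -/np.
    by have := vnorm_pos e'; have := vnorm_pos p; rewrite -/np => ? ?; nra.
  have Hpv : dot p v = dot p e' - dot p b by rewrite Ev dot_addr dot_scalr; ring.
  have Hpen : c * np * vnorm v <= c * (nb + dl) * ((1 + 2 * tau) * nb).
    rewrite !Rmult_assoc; apply: Rmult_le_compat_l; first lra.
    by have := vnorm_pos v; have := vnorm_pos p; rewrite -/np => ? ?; nra.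
  (* collect: the total is nb ((nb + dl) A - nb + dl) with A <= (1 + c) / 2 *)
  set A := 2 * tau + c * (1 + 2 * tau).
  have HA : A <= (1 + c) / 2 by rewrite /A; nra.
  have HA0 : 0 <= A by rewrite /A; nra.
  have Hsum : dot p v + c * np * vnorm v <= nb * ((nb + dl) * A - nb + dl).
    have -> : nb * ((nb + dl) * A - nb + dl) =
      (nb + dl) * (2 * tau * nb) - (nb * nb - dl * nb) + c * (nb + dl) * ((1 + 2 * tau) * nb).
      by rewrite /A; ring.
    lra.
  have Hbr : (nb + dl) * A - nb + dl <= - ((1 - c) / 16 * eps).
    have : (nb + dl) * A <= (nb + dl) * ((1 + c) / 2) by apply: Rmult_le_compat_l; lra.
    nra.
  split; first nra.
  apply: Rle_trans Hsum _.
  have -> : - ((1 - c) / 16 * eps * nb) = nb * (- ((1 - c) / 16 * eps)) by ring.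
  by apply: Rmult_le_compat_l; lra.
Qed.

(* First-order expansion of |p + q| along the step q = t (v + eta): if v
   decreases |p + .| + c |.| with margin G, so does the actual step q,
   provided the error eta and the step length t are small compared with G. *)
Lemma first_order_descent p v eta t c G :
  0 <= c <= 1 -> 0 < t -> dot p v + c * vnorm p * vnorm v <= - G ->
  4 * vnorm p * vnorm eta <= G -> vnorm eta <= 1 ->
  t * ((vnorm v + 1) * (vnorm v + 1)) <= G -> t * (vnorm v + 1) <= vnorm p ->
  vnorm (vadd p (vscal t (vadd v eta))) + c * vnorm (vscal t (vadd v eta)) <= vnorm p.
Proof.
  move=> Hc Ht Hpv Hpe He HtG HtP.
  set q := vscal t (vadd v eta).
  have HP := vnorm_pos p; have HV := vnorm_pos v; have HE := vnorm_pos eta.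
  have HQ := vnorm_pos q.
  have HQle : vnorm q <= t * (vnorm v + vnorm eta).
    by rewrite /q vnorm_scal Rabs_pos_eq; [have := vnorm_add v eta; nra | lra].
  have Hpq : dot p q <= t * (dot p v + vnorm p * vnorm eta).
    by rewrite /q dot_scalr dot_addr; have := cauchy_schwarz p eta; nra.
  have HcQ : c * vnorm q <= vnorm p by nra.
  suff Hsq : dot (vadd p q) (vadd p q) <= (vnorm p - c * vnorm q) * (vnorm p - c * vnorm q).
    by have := vnorm_le_sq _ _ (ltac:(lra) : 0 <= vnorm p - c * vnorm q) Hsq; lra.
  rewrite dot_sq_add -!vnorm_sq.
  (* the second-order terms are absorbed by the margin G *)
  have K1 : c * vnorm p * vnorm q <= c * vnorm p * (t * (vnorm v + vnorm eta)).
    by apply: Rmult_le_compat_l; nra.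
  have K2 : vnorm q * vnorm q <= t * G.
    have HtV : vnorm q <= t * (vnorm v + 1) by nra.
    have := Rmult_le_compat_l t _ _ (Rlt_le _ _ Ht) HtG; nra.
  have K3 : t * (dot p v + c * vnorm p * vnorm v) <= - (t * G).
    by have := Rmult_le_compat_l t _ _ (Rlt_le _ _ Ht) Hpv; lra.
  have K4 : t * (4 * vnorm p * vnorm eta) <= t * G.
    exact: Rmult_le_compat_l (Rlt_le _ _ Ht) Hpe.
  have K5 : c * (t * vnorm p * vnorm eta) <= t * vnorm p * vnorm eta.
    have Hpos : 0 <= t * vnorm p * vnorm eta by apply: Rmult_le_pos; nra.
    nra.
  have K6 : 0 <= c * c * (vnorm q * vnorm q) by nra.
  nra.
Qed.

Lemma tangent_descent (X : vec n -> Prop) w y v c G gap :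
  0 <= c <= 1 -> 0 < G -> 0 < gap -> 0 < vnorm (vsub w y) -> 0 < vnorm v ->
  tangent_cone X w v ->
  dot (vsub w y) v + c * vnorm (vsub w y) * vnorm v <= - G ->
  exists x', X x' /\ 0 < vnorm (vsub x' w) < gap /\
    vnorm (vsub x' y) + c * vnorm (vsub x' w) <= vnorm (vsub w y).
Proof.
  move=> Hc HG Hgap HP HV [t [xs [Ht [Ht0 [HX [_ Hquot]]]]]] Hpv.
  have HP0 := vnorm_pos (vsub w y).
  have [e0 [He0 [He1 [He2 He3]]]] :=
    small_pos3 2 (vnorm v) 1 1 (4 * vnorm (vsub w y)) G ltac:(lra) HV ltac:(lra) ltac:(lra)
      ltac:(lra) HG.
  have HV1 : 0 <= vnorm v + 1 by lra.
  have [t0 [Ht0p [Ht1 [Ht2 Ht3]]]] :=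
    small_pos3 ((vnorm v + 1) * (vnorm v + 1)) G (vnorm v + 1) (vnorm (vsub w y))
      (vnorm v + 1) gap ltac:(nra) HG HV1 HP HV1 Hgap.
  have [N1 HN1] := Ht0 t0 Ht0p.
  have [N2 HN2] := Hquot e0 He0.
  set k := maxn N1 N2.
  have Htk : t k < t0.
    by have := HN1 k ltac:(lia); rewrite /R_dist Rminus_0_r Rabs_pos_eq; [|apply: Rlt_le].
  set eta := vsub (vscal (/ t k) (vsub (xs k) w)) v.
  have He : vnorm eta < e0 by apply: HN2; lia.
  have Eq : vsub (xs k) w = vscal (t k) (vadd v eta).
    have := Ht k => ?; apply: functional_extensionality => i.
    by rewrite /eta /vsub /vadd /vscal; field; lra.
  have Htk0 := Ht k; have HE := vnorm_pos eta.
  exists (xs k); split; first exact: HX.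
  have Ey : vsub (xs k) y = vadd (vsub w y) (vscal (t k) (vadd v eta)) by rewrite -Eq; vext.
  split.
  - rewrite Eq vnorm_scal Rabs_pos_eq; last lra.
    have Hge := vnorm_add_ge v eta; have Hle := vnorm_add v eta.
    split; first by apply: Rmult_lt_0_compat; lra.
    apply: Rle_lt_trans (_ : t k * (vnorm v + 1) < _); first by apply: Rmult_le_compat_l; lra.
    by apply: Rlt_le_trans (_ : t0 * (vnorm v + 1) <= _); [apply: Rmult_lt_compat_r|]; lra.
  - rewrite Ey Eq; apply: (first_order_descent _ _ _ _ _ G) => //.
    + by apply: Rle_trans He3; apply: Rmult_le_compat_l; lra.
    + lra.
    + by apply: Rle_trans Ht1; nra.
    + by apply: Rle_trans Ht2; nra.
Qed.

End Descent.

Lemma Rmax_lip a b e : Rabs (Rmax a e - Rmax b e) <= Rabs (a - b).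
Proof.
  rewrite /Rmax; case: Rle_dec => Ha; case: Rle_dec => Hb;
    apply: Rabs_le; have := Rle_abs (a - b); have := Rle_abs (- (a - b));
    rewrite Rabs_Ropp; lra.
Qed.

Section RadialDescent.
Context {n : nat}.
Variable X : vec n -> Prop.

Lemma nearly_radial_witness xbar : nearly_radial X xbar ->
  forall tau, 0 < tau -> exists delta, 0 < delta /\
  forall x, X x -> 0 < vnorm (vsub x xbar) < delta ->
  exists v, tangent_cone X x v /\
    vnorm (vsub xbar (vadd x v)) < 2 * tau * vnorm (vsub x xbar).
Proof.
  move=> NR tau Htau; have [delta [Hd Hnr]] := NR tau Htau.
  exists delta; split => // x Xx [Hx0 Hxd].
  have Hne : x <> xbar by move=> E; rewrite E vsub_self in Hx0; lra.
  set E := fun r => exists s, (exists v, tangent_cone X x v /\ s = vadd x v) /\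
                              r = vnorm (vsub xbar s).
  have [d Hinf] : exists d, is_inf E d.
    apply: inf_exists; last by move=> r [s [_ ->]]; exact: vnorm_pos.
    by do 2 eexists; split; [exists (fun _ => 0); split; [exact: tangent_zero|] |].
  have Hdt : d <= tau * vnorm (vsub x xbar).
    have := Hnr x Xx Hne Hxd d Hinf.
    by move/(Rmult_le_compat_r (vnorm (vsub x xbar)) _ _ (Rlt_le _ _ Hx0));
      rewrite /Rdiv Rmult_assoc Rinv_l; lra.
  apply: NNPP => Hno.
  have : 2 * tau * vnorm (vsub x xbar) <= d.
    apply: (proj2 Hinf) => r [s [[v [Tv ->]] ->]]; apply: Rnot_lt_le => Hl.
    by apply: Hno; exists v.
  nra.
Qed.

(* The direction
   of motion is the almost radial tangent vector given by near radiality. *)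
Lemma radial_descent xbar c tau dnr eps dl (y w : vec n) :
  0 < c < 1 -> 0 < tau <= (1 - c) / 8 -> 0 < eps -> 0 <= dl <= eps * (1 - c) / 16 ->
  (forall x, X x -> 0 < vnorm (vsub x xbar) < dnr ->
     exists v, tangent_cone X x v /\
       vnorm (vsub xbar (vadd x v)) < 2 * tau * vnorm (vsub x xbar)) ->
  vnorm (vsub xbar y) <= dl -> X w -> vnorm (vsub w xbar) < dnr -> eps < vnorm (vsub w y) ->
  exists x', X x' /\ 0 < vnorm (vsub x' w) /\
    Rmax (vnorm (vsub x' y)) eps + c * vnorm (vsub x' w) <= vnorm (vsub w y).
Proof.
  move=> Hc Htau He Hdl Hwit Hm Xw Hwd Hwy.
  set b := vsub w xbar; set m := vsub xbar y.
  have Ep : vsub w y = vadd b m by rewrite /b /m; vext.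
  have Hb0 : 0 < vnorm b by have := vnorm_add b m; rewrite -Ep /m; nra.
  have [v [Tv Hv]] := Hwit w Xw (conj Hb0 Hwd).
  have Hvb : vnorm (vadd v b) < 2 * tau * vnorm b.
    have -> : vadd v b = vscal (-1) (vsub xbar (vadd w v)) by rewrite /b; vext.
    by rewrite vnorm_opp.
  have [Hv0 Hdesc] := obtuse_direction b m v c tau eps dl
    ltac:(lra) ltac:(lra) He Hdl Hm ltac:(by rewrite -Ep) Hvb.
  rewrite -Ep in Hdesc.
  have [x' [Xx' [[Hx'0 Hx'gap] Hx'd]]] :=
    tangent_descent X w y v c ((1 - c) / 16 * eps * vnorm b) (vnorm (vsub w y) - eps)
      ltac:(lra) ltac:(apply: Rmult_lt_0_compat; [apply: Rmult_lt_0_compat|]; lra)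
      ltac:(lra) ltac:(lra) Hv0 Tv Hdesc.
  exists x'; split => //; split => //.
  by rewrite /Rmax; case: Rle_dec; nra.
Qed.

Lemma penalized_min (y z : vec n) eps c : is_closed X -> X z -> 0 < c -> 0 <= eps ->
  exists ws, X ws /\
    Rmax (vnorm (vsub ws y)) eps + c * vnorm (vsub ws z) <= Rmax (vnorm (vsub z y)) eps /\
    forall w, X w ->
      Rmax (vnorm (vsub w y)) eps + c * vnorm (vsub w z) <= Rmax (vnorm (vsub z y)) eps ->
      Rmax (vnorm (vsub ws y)) eps <= Rmax (vnorm (vsub w y)) eps.
Proof.
  move=> Hcl Xz Hc He.
  set h := fun w => Rmax (vnorm (vsub w y)) eps.
  have Hh w w' : Rabs (h w - h w') <= 1 * vnorm (vsub w w').
    by rewrite Rmult_1_l; apply: Rle_trans (Rmax_lip _ _ _) (vnorm_dist_lip _ _ _).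
  have Hh0 w : eps <= h w by apply: Rmax_r.
  set g := fun w => h w + c * vnorm (vsub w z).
  have Hg w w' : Rabs (g w - g w') <= (1 + c) * vnorm (vsub w w').
    have -> : g w - g w' = (h w - h w') + c * (vnorm (vsub w z) - vnorm (vsub w' z)).
      by rewrite /g; ring.
    apply: Rle_trans (Rabs_triang _ _) _; rewrite Rabs_mult (Rabs_pos_eq c); last lra.
    by have := Hh w w'; have := vnorm_dist_lip w w' z; nra.
  have Hgz : g z <= h z by rewrite /g vsub_self; lra.
  have Hbd w : X w /\ g w <= h z -> vnorm (vsub w z) <= h z / c.
    move=> [_ Hw]; apply: (Rmult_le_reg_l c) => //.
    have -> : c * (h z / c) = h z by field; lra.
    by rewrite /g in Hw; have := Hh0 w; lra.
  have Hclosed (u : nat -> vec n) x : (forall k, X (u k) /\ g (u k) <= h z) -> vconv u x ->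
      X x /\ g x <= h z.
    move=> Hu Hux; split; first exact: Hcl (fun k => proj1 (Hu k)) Hux.
    exact: (lipschitz_le_lim g (1 + c) _ u x ltac:(lra) Hg Hux (fun k => proj2 (Hu k))).
  have Hpos w : X w /\ g w <= h z -> 0 <= h w by move=> _; have := Hh0 w; lra.
  have [ws [[Xws Hws] Hmin]] :=
    lipschitz_min _ h z (h z / c) 1 (conj Xz Hgz) Hbd Hclosed ltac:(lra) Hh Hpos.
  exists ws; split => //; split => // w Xw Hw.
  exact: Hmin w (conj Xw Hw).
Qed.

(* The key estimate of the forward implication: near xbar, the map
   x |-> B_eps(x) /\ X moves Lipschitz-continuously with any constant L > 1.
   For z in B_eps(y') /\ X, the Ekeland-type point ws of penalized_min lies
   in B_eps(y), since otherwise radial_descent would improve on it. *)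
Lemma local_projection xbar L : is_closed X -> nearly_radial X xbar -> 1 < L ->
  exists eps1, 0 < eps1 /\ forall eps, 0 < eps < eps1 -> exists delta, 0 < delta /\
  forall y y' z, vnorm (vsub y xbar) < delta -> vnorm (vsub y' xbar) < delta -> X z ->
    vnorm (vsub z y') <= eps ->
    exists w, X w /\ vnorm (vsub w y) <= eps /\ vnorm (vsub z w) <= L * vnorm (vsub y' y).
Proof.
  move=> Hcl NR HL.
  set c := / L.
  have Hc : 0 < c < 1.
    by split; [apply: Rinv_0_lt_compat | rewrite -Rinv_1; apply: Rinv_lt_contravar]; lra.
  have HLc : L * c = 1 by rewrite /c; field; lra.
  have [dnr [Hdnr Hwit]] := nearly_radial_witness xbar NR ((1 - c) / 8) ltac:(lra).
  exists (dnr / 2); split; first lra.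
  move=> eps [He Hed].
  set dl := eps * (1 - c) * c / 16.
  have Hdl : 0 < dl by rewrite /dl; apply: Rmult_lt_0_compat; [apply: Rmult_lt_0_compat|]; nra.
  have Hdl2 : dl <= eps * (1 - c) / 16.
    have Hec : 0 <= eps * (1 - c) by nra.
    by rewrite /dl; nra.
  exists dl; split => // y y' z Hy Hy' Xz Hz.
  have Hyy : vnorm (vsub y' y) < 2 * dl.
    by have := vnorm_tri y' xbar y; rewrite (vnorm_sub_sym xbar y); lra.
  have Hhz : Rmax (vnorm (vsub z y)) eps <= eps + vnorm (vsub y' y).
    by apply: Rmax_lub; [have := vnorm_tri z y' y|have := vnorm_pos (vsub y' y)]; lra.
  have [ws [Xws [Hws Hmin]]] := penalized_min y z eps c Hcl Xz ltac:(lra) ltac:(lra).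
  have Hwsz : c * vnorm (vsub ws z) <= vnorm (vsub y' y).
    by have := Rmax_r (vnorm (vsub ws y)) eps; lra.
  exists ws; split => //; split.
  - apply: Rnot_lt_le => Hgt.
    have Hwz : vnorm (vsub ws z) <= eps * (1 - c) / 8.
      by apply: (Rmult_le_reg_l c); [lra | rewrite /dl in Hyy; nra].
    have Hnear : vnorm (vsub ws xbar) < dnr.
      have Hdl16 : dl <= eps / 16 by rewrite /dl; nra.
      have Hc8 : eps * (1 - c) / 8 <= eps / 8 by nra.
      by have := vnorm_tri ws z xbar; have := vnorm_tri z y' xbar; lra.
    have [x' [Xx' [Hx'0 Hx'd]]] := radial_descent xbar c ((1 - c) / 8) dnr eps dl y ws
      Hc ltac:(lra) He ltac:(lra) Hwit
      ltac:(rewrite vnorm_sub_sym; lra) Xws Hnear Hgt.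
    have Hhws : Rmax (vnorm (vsub ws y)) eps = vnorm (vsub ws y) by apply: Rmax_left; lra.
    have := Hmin x' Xx'; rewrite Hhws in Hws Hx'd.
    have := vnorm_tri x' ws z; nra.
  - rewrite vnorm_sub_sym -(Rmult_1_l (vnorm (vsub ws z))) -HLc Rmult_assoc.
    by apply: Rmult_le_compat_l; lra.
Qed.

End RadialDescent.

Section RadialToPeaceful.
Context {n : nat}.
Variable X : vec n -> Prop.

Lemma lip_of_projection xbar L eps delta (Y : vec n -> Prop) : 0 < delta -> 0 <= L ->
  (forall y y' z, vnorm (vsub y xbar) < delta -> vnorm (vsub y' xbar) < delta -> X z ->
    vnorm (vsub z y') <= eps ->
    exists w, X w /\ vnorm (vsub w y) <= eps /\ vnorm (vsub z w) <= L * vnorm (vsub y' y)) ->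
  lip_le (Phi X eps) Y xbar L.
Proof.
  move=> Hd HL Hproj L' HL'; exists delta; split => // y y' _ _ _ Hy Hy' eta Heta.
  have Hn := vnorm_pos (vsub y' y).
  have HLe : L * vnorm (vsub y' y) <= eta by nra.
  split.
  - move=> z [Hz Xz]; have [w [Xw [Hw1 Hw2]]] := Hproj y y' z Hy Hy' Xz Hz.
    by exists w; split; [split|lra].
  - move=> z [Hz Xz]; have [w [Xw [Hw1 Hw2]]] := Hproj y' y z Hy' Hy Xz Hz.
    by exists w; split; [split|rewrite (vnorm_sub_sym y y') in Hw2; lra].
Qed.

Lemma nearly_radial_lip xbar L (Y : vec n -> Prop) : is_closed X -> nearly_radial X xbar ->
  1 < L -> exists eps1, 0 < eps1 /\ forall eps, 0 < eps < eps1 ->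
    lip_le (Phi X eps) Y xbar L.
Proof.
  move=> Hcl NR HL.
  have [eps1 [He1 Hproj]] := local_projection X xbar L Hcl NR HL.
  exists eps1; split => // eps Heps.
  have [delta [Hd Hp]] := Hproj eps Heps.
  by apply: (lip_of_projection xbar L eps delta) => //; lra.
Qed.

Lemma nearly_radial_peaceful xbar : is_closed X -> nearly_radial X xbar -> one_peaceful X xbar.
Proof.
  move=> Hcl NR; split.
  - have [eps1 [He1 Hlip]] := nearly_radial_lip xbar 2 X Hcl NR ltac:(lra).
    by exists eps1; split => // eps Heps; exists 2; apply: Hlip.
  - by move=> L' HL'; apply: nearly_radial_lip.
Qed.

End RadialToPeaceful.


Section PeacefulToRadial.
Context {n : nat}.
Implicit Types a d v : vec n.

Lemma ball_halfspace a d s : 0 < s -> vnorm (vadd a (vscal s d)) <= vnorm a -> dot a d <= 0.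
Proof.
  move=> Hs Hb.
  have := sq_le_vnorm _ _ (vnorm_pos a) Hb.
  rewrite dot_sq_add dot_scalr dot_scall dot_scalr -vnorm_sq => H.
  have := dot_pos d => Hdd; apply: Rnot_lt_le => Hc; nra.
Qed.

Lemma radial_step_bound a v L : 1 <= L -> vnorm v <= L -> dot a v <= - vnorm a ->
  let lam := vnorm a / (L * L) in
  dot (vadd a (vscal lam v)) (vadd a (vscal lam v)) <= vnorm a * vnorm a * (1 - / (L * L)).
Proof.
  move=> HL Hv Hav lam.
  have HI : 0 < / (L * L) by apply: Rinv_0_lt_compat; nra.
  have Elam : lam = vnorm a * / (L * L) by [].
  have EI : L * L * / (L * L) = 1 by field; lra.
  have Hvv := sq_le_vnorm _ _ (ltac:(lra) : 0 <= L) Hv.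
  have Hr := vnorm_pos a.
  rewrite dot_sq_add dot_scalr dot_scall dot_scalr -(vnorm_sq a).
  have Hlam : 0 <= lam by rewrite Elam; nra.
  have T1 : lam * (lam * dot v v) <= vnorm a * vnorm a * / (L * L).
    apply: Rle_trans (_ : lam * lam * (L * L) <= _); first nra.
    by rewrite Elam; nra.
  have T2 : 2 * (lam * dot a v) <= - 2 * (vnorm a * vnorm a * / (L * L)) by rewrite Elam; nra.
  nra.
Qed.

Lemma one_minus_inv_sq_le e : 0 < e <= 1/2 ->
  1 - / ((1 + e * e / 2) * (1 + e * e / 2)) <= e * e.
Proof.
  move=> He; set L := 1 + e * e / 2.
  have HL2 : 0 < L * L by rewrite /L; nra.
  suff : 1 - e * e <= / (L * L) by lra.
  apply: (Rmult_le_reg_l (L * L)) => //; rewrite Rinv_r; last lra.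
  by rewrite /L; nra.
Qed.

Lemma quotient_bounds (xbar x w u : vec n) s L : 0 < s ->
  dot (vsub x xbar) u = - vnorm (vsub x xbar) ->
  ball (vadd xbar (vscal s u)) (vnorm (vsub x xbar)) w -> vnorm (vsub x w) <= L * s ->
  vnorm (vscal (/ s) (vsub w x)) <= L /\
  dot (vsub x xbar) (vscal (/ s) (vsub w x)) <= - vnorm (vsub x xbar).
Proof.
  move=> Hs Hau Hb Hd; set q := vscal (/ s) (vsub w x); split.
  - rewrite /q vnorm_scal Rabs_pos_eq; last exact/Rlt_le/Rinv_0_lt_compat.
    apply: (Rmult_le_reg_l s) => //; rewrite -Rmult_assoc Rinv_r; last lra.
    by rewrite vnorm_sub_sym; lra.
  - have E : vsub w (vadd xbar (vscal s u)) = vadd (vsub x xbar) (vscal s (vsub q u)).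
      by apply: functional_extensionality => i; rewrite /q /vsub /vadd /vscal; field; lra.
    have := ball_halfspace (vsub x xbar) (vsub q u) s Hs; rewrite -E.
    by move/(_ Hb); rewrite dot_subr Hau; lra.
Qed.

(* Core of the converse: a Lipschitz bound Lip < L for tilde Phi_r at xbar
   produces, at any x in X with |x - xbar| = r, a tangent direction of length
   at most L that makes an angle of at least 90 degrees with x - xbar; it is
   a cluster value of quotients (w - x)/s with w in B_r(xbar + s u) near x,
   where u is the unit vector from x towards xbar. *)
Lemma peaceful_tangent (X : vec n -> Prop) xbar x Lip L :
  X x -> 0 < vnorm (vsub x xbar) -> 0 <= Lip < L ->
  lip_le (Phi X (vnorm (vsub x xbar))) (fun _ => True) xbar Lip ->
  exists v, tangent_cone X x v /\ vnorm v <= L /\ dot (vsub x xbar) v <= - vnorm (vsub x xbar).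
Proof.
  set a := vsub x xbar; set r := vnorm a.
  move=> Xx Hr HL Hlip.
  have [delta [Hdelta Hh]] := Hlip ((Lip + L) / 2) ltac:(lra).
  set c0 := Rmin (delta / 2) 1.
  have Hc0 : 0 < c0 by apply: Rmin_glb_lt; lra.
  have Hc1 : c0 <= delta / 2 by apply: Rmin_l.
  have Hc2 : c0 <= 1 by apply: Rmin_r.
  set s := fun k : nat => c0 / (INR k + 1).
  have Hs k : 0 < s k <= / (INR k + 1) /\ s k < delta.
    have := inv_succ_pos k; have := pos_INR k => P2 P.
    have P3 : / (INR k + 1) <= 1 by rewrite -Rinv_1; apply: Rinv_le_contravar; lra.
    by rewrite /s /Rdiv; split; [split|]; nra.
  set u := vscal (- / r) a.
  have Hu : vnorm u = 1.
    by rewrite /u vnorm_scal -/r Rabs_Ropp Rabs_inv Rabs_pos_eq; [field|]; lra.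
  have Hau : dot a u = - r by rewrite /u dot_scalr -vnorm_sq -/r; field; lra.
  set y := fun k => vadd xbar (vscal (s k) u).
  (* x lies in Phi_r(xbar), hence is close to some w k in Phi_r(y k) *)
  have Hw k : exists w, (ball (y k) r w /\ X w) /\ vnorm (vsub x w) <= L * s k.
    have [[Hs1 Hs2] Hs3] := Hs k.
    have Ny : vnorm (vsub xbar (y k)) = s k.
      have -> : vsub xbar (y k) = vscal (- s k) u by rewrite /y; vext.
      by rewrite vnorm_scal Hu Rabs_Ropp Rabs_pos_eq; lra.
    have Hneq : y k <> xbar by move=> E; rewrite E vsub_self in Ny; lra.
    have [Hfwd _] := Hh (y k) xbar I I Hneq
      ltac:(by rewrite vnorm_sub_sym Ny) ltac:(by rewrite vsub_self) (L * s k)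
      ltac:(by rewrite Ny; nra).
    by apply: Hfwd; split => //; rewrite /ball -/a -/r; lra.
  have [w Hwk] := choice _ Hw.
  apply: (tangent_of_sequence X x s w L (fun v => vnorm v <= L /\ dot a v <= - r)).
  - by move=> k; case: (Hs k).
  - by move=> k; case: (Hwk k) => [[_ ?] _].
  - by move=> k; rewrite vnorm_sub_sym; case: (Hwk k).
  - lra.
  - move=> k; have [[Hb _] Hd] := Hwk k; have [[Hs1 _] _] := Hs k.
    exact: (quotient_bounds _ _ _ _ _ _ Hs1 Hau Hb Hd).
  - move=> us v Hk Hc; split.
    + by apply: (lim_norm_le us) => // k; case: (Hk k).
    + by apply: (lim_dot_le us) => // k; case: (Hk k).
Qed.

Lemma peaceful_nearly_radial (X : vec n -> Prop) xbar :
  one_peaceful X xbar -> nearly_radial X xbar.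
Proof.
  move=> [_ HP] eps He.
  set e := Rmin eps (1/2).
  have He0 : 0 < e by apply: Rmin_glb_lt; lra.
  have He1 : e <= eps by apply: Rmin_l.
  have He2 : e <= 1/2 by apply: Rmin_r.
  set L := 1 + e * e / 2.
  have [eps1 [Heps1 Hlip]] := HP (1 + e * e / 4) ltac:(nra).
  exists eps1; split => // x Xx Hne.
  set a := vsub x xbar; set r := vnorm a.
  move=> Hlt d Hd.
  have Hr : 0 < r.
    have [//|Hr0] := Rle_lt_or_eq_dec 0 r (vnorm_pos a).
    by case: Hne; apply: vsub_eq0; exact: esym Hr0.
  have [v [Tv [Hv Hav]]] := peaceful_tangent X xbar x (1 + e * e / 4) L Xx Hr
    ltac:(rewrite /L; split; nra) (Hlip r (conj Hr Hlt)).
  have HL : 1 <= L by rewrite /L; nra.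
  set lam := r / (L * L).
  have Hlam : 0 < lam by apply: Rdiv_lt_0_compat; nra.
  (* x + lam v is a point of x + T_X(x) within e r of xbar *)
  have Hd1 : d <= vnorm (vsub xbar (vadd x (vscal lam v))).
    apply: (proj1 Hd); exists (vadd x (vscal lam v)); split => //.
    by exists (vscal lam v); split => //; apply: tangent_scale.
  have E : vsub xbar (vadd x (vscal lam v)) = vscal (-1) (vadd a (vscal lam v)) by rewrite /a; vext.
  rewrite E vnorm_opp in Hd1.
  have Hb : vnorm (vadd a (vscal lam v)) <= e * r.
    apply: vnorm_le_sq; first nra.
    apply: Rle_trans (radial_step_bound a v L HL Hv Hav) _.
    have HF : 1 - / (L * L) <= e * e by exact: one_minus_inv_sq_le.
    rewrite -/r; nra.
  apply: (Rmult_le_reg_r r) => //; rewrite /Rdiv Rmult_assoc Rinv_l; nra.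
Qed.

End PeacefulToRadial.

Theorem theorem7p3 (n : nat) (X : vec n -> Prop) (xbar : vec n) :
  is_closed X -> X xbar ->
  (nearly_radial X xbar -> one_peaceful X xbar) /\
  (clarke_regular_near X xbar -> one_peaceful X xbar -> nearly_radial X xbar).
Proof.
  move=> Hcl _; split.
  - exact: nearly_radial_peaceful.
  - by move=> _; apply: peaceful_nearly_radial.
Qed.
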